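(* Let $k,c\geq 0$ be integers. If $G$ is a $k$-gap-planar graph and a subgraph $G'$ of $G$ is a $(\leq c)$-subdivision of some graph $H$, then $H$ is $(c+1)k$-gap-planar.
   Context: All graphs are simple, finite and undirected. A drawing of a graph $G$ in the plane represents each vertex by a distinct point and each edge $vw$ by a non-self-intersecting curve between the points of $v$ and $w$, such that no three edges cross at a single point. A drawing is $k$-gap-planar if every crossing can be charged to one of the two edges involved so that at most $k$ crossings are charged to each edge; a graph is $k$-gap-planar if it has a $k$-gap-planar drawing in the plane. A $(\leq c)$-subdivision of a graph $H$ is obtained by replacing each edge of $H$ by a path with at most $c$ new internal vertices, the paths being internally disjoint. *)

From mathcomp Require Import all_boot.
From Stdlib Require Import Reals List.

Set Implicit Arguments.
Unset Strict Implicit.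
Unset Printing Implicit Defensive.

Record sgraph := SGraph {
  svert : finType;
  sadj : rel svert;
  sadj_sym : symmetric sadj;
  sadj_irr : irreflexive sadj }.

Definition is_edge (G : sgraph) (e : {set svert G}) : Prop :=
  exists u v : svert G, @sadj G u v /\ e = [set u; v].

Definition point := (R * R)%type.

Definition dist (p q : point) : R :=
  sqrt ((fst p - fst q) ^ 2 + (snd p - snd q) ^ 2)%R.

Definition in01 (t : R) : Prop := (0 <= t <= 1)%R.

Definition curve_continuous (g : R -> point) : Prop :=
  forall t, in01 t -> forall eps, (eps > 0)%R ->
    exists delta, (delta > 0)%R /\
      forall s, in01 s -> (Rabs (s - t) < delta)%R -> (dist (g s) (g t) < eps)%R.

Definition curve_simple (g : R -> point) : Prop :=
  forall s t, in01 s -> in01 t -> g s = g t -> s = t.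

Definition on_interior (g : R -> point) (p : point) : Prop :=
  exists t, (0 < t < 1)%R /\ g t = p.

Definition is_drawing (G : sgraph) (pos : svert G -> point)
    (curve : {set svert G} -> R -> point) : Prop :=
  injective pos /\
  (forall e, is_edge e ->
     curve_continuous (curve e) /\ curve_simple (curve e) /\
     exists u v, e = [set u; v] /\ curve e 0%R = pos u /\ curve e 1%R = pos v) /\
  (forall e w p, is_edge e -> on_interior (curve e) p -> p <> pos w) /\
  (forall e1 e2 e3 p, is_edge e1 -> is_edge e2 -> is_edge e3 ->
     e1 <> e2 -> e1 <> e3 -> e2 <> e3 ->
     on_interior (curve e1) p -> on_interior (curve e2) p ->
     on_interior (curve e3) p -> False).

Definition crossing (G : sgraph) (curve : {set svert G} -> R -> point)
    (e1 e2 : {set svert G}) (p : point) : Prop :=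
  is_edge e1 /\ is_edge e2 /\ e1 <> e2 /\
  on_interior (curve e1) p /\ on_interior (curve e2) p.

(* k-gap-planar drawing: every crossing {e1,e2} at p is charged (chi) to one of
   e1, e2, and every edge is charged with at most k crossings. *)
Definition gap_planar_drawing (G : sgraph) (curve : {set svert G} -> R -> point)
    (k : nat) : Prop :=
  exists chi : {set svert G} -> {set svert G} -> point -> {set svert G},
    (forall e1 e2 p, crossing curve e1 e2 p ->
       chi e1 e2 p = chi e2 e1 p /\ (chi e1 e2 p = e1 \/ chi e1 e2 p = e2)) /\
    (forall e, is_edge e ->
       exists l : list ({set svert G} * point), (length l <= k)%coq_nat /\
         forall f p, crossing curve e f p -> chi e f p = e -> In (f, p) l).

Definition k_gap_planar (G : sgraph) (k : nat) : Prop :=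
  exists (pos : svert G -> point) (curve : {set svert G} -> R -> point), is_drawing pos curve /\ gap_planar_drawing curve k.

(* G contains a subgraph that is a (<= c)-subdivision of H: an injective map
   phi of the vertices of H into G, and for every edge uv of H a path
   phi u, P u v, phi v in G with at most c internal vertices, where internal
   vertices are not branch vertices and paths of distinct edges are
   internally disjoint. *)
Definition has_subdivision_subgraph (G H : sgraph) (c : nat) : Prop :=
  exists (phi : svert H -> svert G) (P : svert H -> svert H -> list (svert G)),
    injective phi /\
    (forall u v, @sadj H u v ->
       P v u = seq.rev (P u v) /\
       (size (P u v) <= c)%N /\
       path (@sadj G) (phi u) (rcons (P u v) (phi v)) /\
       uniq (phi u :: rcons (P u v) (phi v)) /\
       (forall x w, x \in P u v -> x != phi w)) /\
    (forall u v u' v', @sadj H u v -> @sadj H u' v' ->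
       [set u; v] <> [set u'; v'] ->
       forall x, x \in P u v -> x \notin P u' v').

(* Every edge uv of H is drawn along the drawn subdivision path of uv in G: the
   curves of the path edges are concatenated one after the other, each time cutting
   the curve built so far at its first point on the next curve, which keeps the
   result simple.  This works because two edges of a gap-planar drawing meet in
   finitely many points, every common interior point being a crossing charged to
   one of them.  An interior point of the new curve is an internal vertex of the
   path or an interior point of a path edge.  As the paths are internally disjoint
   and no point lies on three edges, a crossing of two edges of H is a crossing of
   exactly one pair of their path edges, and it is charged to the edge of H whose
   path edge was charged.  An edge of H has at most c + 1 path edges, each charged
   with at most k crossings. *)

From Pilot Require Import Defs.
From mathcomp Require Import all_boot.
From Stdlib Require Import Reals Lra RList ClassicalEpsilon.
From mathcomp Require Import zify.

Set Implicit Arguments.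
Unset Strict Implicit.
Unset Printing Implicit Defensive.

Section Curves.
Local Open Scope R_scope.

Definition continuous_on (a b : R) (f : R -> point) : Prop :=
  forall t, a <= t <= b -> forall eps, eps > 0 ->
    exists delta, delta > 0 /\
      forall s, a <= s <= b -> Rabs (s - t) < delta -> Defs.dist (f s) (f t) < eps.

Lemma continuous_on_sub a b a' b' f :
  continuous_on a b f -> a <= a' -> b' <= b -> continuous_on a' b' f.
Proof.
move=> fc aa' b'b t t_ab eps eps_pos.
have [d [d_pos fd]] := fc t ltac:(lra) eps eps_pos.
by exists d; split => // s s_ab st; apply: fd => //; lra.
Qed.

Lemma continuous_on_shift a b d f :
  continuous_on (a + d) (b + d) f -> continuous_on a b (fun u => f (u + d)).
Proof.
move=> fc t t_ab eps eps_pos.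
have [e [e_pos fe]] := fc (t + d) ltac:(lra) eps eps_pos.
exists e; split => // s s_ab st; apply: fe; first lra.
by replace (s + d - (t + d)) with (s - t) by ring.
Qed.

Lemma continuous_on_rescale D f :
  0 < D -> continuous_on 0 D f -> curve_continuous (fun t => f (t * D)).
Proof.
move=> D_pos fc t [t0 t1] eps eps_pos.
have [d [d_pos fd]] := fc (t * D) ltac:(split; nra) eps eps_pos.
exists (d / D); split; first exact: Rdiv_lt_0_compat.
move=> s [s0 s1] st; apply: fd; first (split; nra).
rewrite -Rmult_minus_distr_r Rabs_mult (Rabs_right D); last lra.
by apply/(Rmult_lt_reg_r (/ D)); [apply: Rinv_0_lt_compat|field_simplify; lra].
Qed.

Lemma continuous_on_glue a m b f g :
  a <= m <= b -> continuous_on a m f -> continuous_on m b g -> f m = g m ->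
  continuous_on a b (fun t => if Rle_dec t m then f t else g t).
Proof.
move=> m_ab fc gc fm_gm t t_ab eps eps_pos.
case: (Rtotal_order t m) => [t_m|[t_m|t_m]].
- have [d [d_pos fd]] := fc t ltac:(lra) eps eps_pos.
  exists (Rmin d (m - t)); split; first by apply: Rmin_pos; lra.
  move=> s s_ab /Rmin_Rgt [sd smt].
  have s_m : s <= m by move: smt; rewrite /Rabs; case: Rcase_abs; lra.
  case: (Rle_dec s m) => [?|[]]; last lra.
  case: (Rle_dec t m) => [?|[]]; last lra.
  by apply: fd => //; lra.
- subst t.
  have [d1 [d1_pos fd]] := fc m ltac:(lra) eps eps_pos.
  have [d2 [d2_pos gd]] := gc m ltac:(lra) eps eps_pos.
  exists (Rmin d1 d2); split; first exact: Rmin_pos.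
  move=> s s_ab /Rmin_Rgt [sd1 sd2].
  case: (Rle_dec m m) => [?|[]]; last lra.
  case: Rle_dec => s_m; first by apply: fd => //; lra.
  by rewrite fm_gm; apply: gd => //; lra.
- have [d [d_pos gd]] := gc t ltac:(lra) eps eps_pos.
  exists (Rmin d (t - m)); split; first by apply: Rmin_pos; lra.
  move=> s s_ab /Rmin_Rgt [sd stm].
  have s_m : m < s by move: stm; rewrite /Rabs; case: Rcase_abs; lra.
  case: (Rle_dec s m) => [?|?]; first lra.
  case: (Rle_dec t m) => [?|?]; first lra.
  by apply: gd => //; lra.
Qed.

Definition on_curve (g : R -> point) (p : point) : Prop := exists s, in01 s /\ g s = p.

Lemma finite_min (L : list R) (P : R -> Prop) :
  (forall t, P t -> List.In t L) -> (exists t, P t) ->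
  exists t, P t /\ forall t', P t' -> t <= t'.
Proof.
move=> PL [t0 Pt0].
pose M := List.filter (fun t => if excluded_middle_informative (P t) then true else false) L.
have inM t : List.In t M <-> P t.
  rewrite List.filter_In; case: excluded_middle_informative => Pt.
  - by split=> [[]|] // _; split=> //; apply: PL.
  - by split=> [[]|].
have /List.in_map_iff [m [Em Mm]] : List.In (MaxRlist (List.map Ropp M)) (List.map Ropp M).
  by apply: MaxRlist_P2; exists (- t0); apply: List.in_map; apply/inM.
exists m; split; first exact/inM.
move=> t' /inM /(List.in_map Ropp) /MaxRlist_P1; lra.
Qed.

Lemma simple_curve_finite_preimage (al : R -> point) (Q : list point) (P : R -> Prop) :
  curve_simple al -> (forall t, P t -> in01 t /\ List.In (al t) Q) ->
  exists L, forall t, P t -> List.In t L.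
Proof.
move=> al_simple PQ.
exists (List.map (fun q => epsilon (inhabits 0) (fun t => in01 t /\ al t = q)) Q).
move=> t Pt; have [t01 tQ] := PQ t Pt.
apply/List.in_map_iff; exists (al t); split => //.
have [s01 Es] := epsilon_spec (inhabits 0) (fun s => in01 s /\ al s = al t)
  (ex_intro _ t (conj t01 erefl)).
exact: al_simple.
Qed.

Lemma reverse_curve (g : R -> point) :
  curve_continuous g -> curve_simple g ->
  curve_continuous (fun t => g (1 - t)) /\ curve_simple (fun t => g (1 - t)) /\
  forall p, on_curve (fun t => g (1 - t)) p -> on_curve g p.
Proof.
move=> gc gs; split; last split.
- move=> t [t0 t1] eps eps_pos.
  have [d [d_pos gd]] := gc (1 - t) ltac:(split; lra) eps eps_pos.
  exists d; split=> // s [s0 s1] st; apply: gd; first (split; lra).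
  by rewrite -Rabs_Ropp Ropp_minus_distr; replace (1 - t - (1 - s)) with (s - t) by ring.
- move=> s t [s0 s1] [t0 t1] E.
  by have := gs (1 - s) (1 - t) ltac:(split; lra) ltac:(split; lra) E; lra.
- by move=> p [s [[s0 s1] <-]]; exists (1 - s); split=> //; split; lra.
Qed.

Definition join_curves (f g : R -> point) (a b t : R) : point :=
  if Rle_dec (t * (a + (1 - b))) a then f (t * (a + (1 - b)))
  else g (t * (a + (1 - b)) + (b - a)).

Section JoinCurves.
Variables (f g : R -> point) (a b : R).
Hypotheses (a01 : in01 a) (b01 : in01 b) (fa_gb : f a = g b) (length_pos : 0 < a + (1 - b)).

Lemma join_curves_continuous :
  curve_continuous f -> curve_continuous g -> curve_continuous (join_curves f g a b).
Proof.
case: a01 b01 => a0 a1 [b0 b1] fc gc.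
apply: (@continuous_on_rescale (a + (1 - b))
  (fun u => if Rle_dec u a then f u else g (u + (b - a)))) => //.
apply: continuous_on_glue; first lra.
- by apply: (@continuous_on_sub 0 1) => //; lra.
- by apply: continuous_on_shift; apply: (@continuous_on_sub 0 1) => //; lra.
- by rewrite fa_gb; congr g; ring.
Qed.

Lemma join_curves_simple :
  curve_simple f -> curve_simple g ->
  (forall s t, 0 <= s <= a -> in01 t -> f s = g t -> s = a) ->
  curve_simple (join_curves f g a b).
Proof.
case: a01 b01 => a0 a1 [b0 b1] fs gs first_hit s t [s0 s1] [t0 t1].
set D := a + (1 - b); have D_def : D = a + (1 - b) by [].
have sD : 0 <= s * D <= D by split; nra.
have tD : 0 <= t * D <= D by split; nra.
have cancel_D : s * D = t * D -> s = t by move=> E; nra.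
rewrite /join_curves -/D.
case: (Rle_dec (s * D) a) => hs; case: (Rle_dec (t * D) a) => ht /= E.
- by apply: cancel_D; apply: fs E; split; lra.
- move/Rnot_le_lt: ht => ht.
  have sa : s * D = a by apply: (first_hit _ _ _ _ E); split; lra.
  rewrite sa fa_gb in E.
  have : b = t * D + (b - a) by apply: gs E; split; lra.
  lra.
- move/Rnot_le_lt: hs => hs.
  have ta : t * D = a by apply: (first_hit _ _ _ _ (esym E)); split; lra.
  rewrite ta fa_gb in E.
  have : s * D + (b - a) = b by apply: gs E; split; lra.
  lra.
- move/Rnot_le_lt: hs => hs; move/Rnot_le_lt: ht => ht.
  have : s * D + (b - a) = t * D + (b - a) by apply: gs E; split; lra.
  by move=> E'; apply: cancel_D; lra.
Qed.

Lemma join_curves0 : join_curves f g a b 0 = f 0.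
Proof.
rewrite /join_curves Rmult_0_l; case: (Rle_dec 0 a) => // a_neg.
by case: a_neg; case: a01.
Qed.

Lemma join_curves1 : join_curves f g a b 1 = g 1.
Proof.
rewrite /join_curves Rmult_1_l; case: Rle_dec => ab /=.
- have b1 : b = 1 by case: b01; lra.
  by rewrite -b1 -fa_gb; congr f; rewrite b1; ring.
- by congr g; ring.
Qed.

Lemma on_join_curves t :
  in01 t -> on_curve f (join_curves f g a b t) \/ on_curve g (join_curves f g a b t).
Proof.
case: a01 b01 => a0 a1 [b0 b1] [t0 t1]; rewrite /join_curves.
have tD : 0 <= t * (a + (1 - b)) <= a + (1 - b) by split; nra.
case: Rle_dec => ta; [left|right]; (eexists; split; last reflexivity); split; lra.
Qed.

End JoinCurves.

Lemma concat_simple_curves (al ga : R -> point) :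
  curve_continuous al -> curve_simple al ->
  curve_continuous ga -> curve_simple ga ->
  al 1 = ga 0 -> al 0 <> ga 1 ->
  (exists Q, forall p, on_curve al p -> on_curve ga p -> List.In p Q) ->
  exists be, curve_continuous be /\ curve_simple be /\ be 0 = al 0 /\ be 1 = ga 1 /\
    forall t, in01 t -> on_curve al (be t) \/ on_curve ga (be t).
Proof.
move=> al_cont al_simple ga_cont ga_simple al1_ga0 al0_ga1 [Q meetQ].
pose hits t := in01 t /\ on_curve ga (al t).
have [L hitsL] : exists L, forall t, hits t -> List.In t L.
  apply: (@simple_curve_finite_preimage al Q _ al_simple) => t [t01 ht].
  by split=> //; apply: meetQ => //; exists t.
have hit1 : hits 1 by split; [split; lra|exists 0; split; [split; lra|]].
have [a [[a01 [b [b01 ga_b]]] a_first]] := @finite_min L hits hitsL (ex_intro _ 1 hit1).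
have al_ga : al a = ga b := esym ga_b.
have length_pos : 0 < a + (1 - b).
  case: a01 b01 => a0 a1 [b0 b1]; apply: Rnot_le_lt => length_le0.
  have a_0 : a = 0 by lra.
  have b_1 : b = 1 by lra.
  by apply: al0_ga1; rewrite -a_0 -b_1 ga_b.
(* follow [al] up to its first point [al a = ga b] on [ga], then [ga] from there on *)
exists (join_curves al ga a b); split; first exact: join_curves_continuous.
split.
  apply: join_curves_simple => // s t s_a t01 E.
  have : a <= s by apply: a_first; split; [case: a01 s_a; split; lra|exists t].
  lra.
split; first exact: join_curves0.
split; first exact: join_curves1.
exact: on_join_curves.
Qed.

Lemma finite_union (A : nat -> point -> Prop) (n : nat) :
  (forall i, (i <= n)%nat -> exists Q, forall p, A i p -> List.In p Q) ->
  exists Q, forall i p, (i <= n)%nat -> A i p -> List.In p Q.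
Proof.
elim: n => [|n IH] finA.
  have [Q AQ] := finA 0%nat isT.
  by exists Q => i p; rewrite leqn0 => /eqP ->; apply: AQ.
have [Q1 AQ1] := IH (fun i i_n => finA i (leqW i_n)).
have [Q2 AQ2] := finA n.+1 (leqnn _).
exists (Q1 ++ Q2) => i p; rewrite leq_eqVlt ltnS => /orP [/eqP ->|i_n] Ap;
  apply: List.in_or_app; [right; exact: AQ2|left; exact: AQ1 Ap].
Qed.

Lemma concat_simple_curve_chain (ga : nat -> R -> point) (N : nat) :
  (forall j, (j <= N)%nat -> curve_continuous (ga j) /\ curve_simple (ga j)) ->
  (forall j, (j < N)%nat -> ga j 1 = ga j.+1 0) ->
  (forall i j, (i < j <= N)%nat ->
     exists Q, forall p, on_curve (ga i) p -> on_curve (ga j) p -> List.In p Q) ->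
  (forall j, (j <= N)%nat -> ga 0%nat 0 <> ga j 1) ->
  forall n, (n <= N)%nat -> exists al, curve_continuous al /\ curve_simple al /\
    al 0 = ga 0%nat 0 /\ al 1 = ga n 1 /\
    forall t, in01 t -> exists j, (j <= n)%nat /\ on_curve (ga j) (al t).
Proof.
move=> ga_curve ga_chain ga_meet ga_ends; elim=> [|n IH] n_N.
  have [ga_cont ga_simple] := ga_curve 0%nat n_N.
  exists (ga 0%nat); do 4 (split=> //).
  by move=> t t01; exists 0%nat; split=> //; exists t.
have [al [al_cont [al_simple [al0 [al1 al_on]]]]] := IH (ltnW n_N).
have [g_cont g_simple] := ga_curve _ n_N.
have [Q meetQ] : exists Q, forall i p, (i <= n)%nat ->
    on_curve (ga i) p /\ on_curve (ga n.+1) p -> List.In p Q.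
  apply: finite_union => i i_n.
  have [Q meetQ] := ga_meet i n.+1 (ltac:(by rewrite ltnS i_n n_N)).
  by exists Q => p [on_i on_n]; apply: meetQ.
have al_meet : forall p, on_curve al p -> on_curve (ga n.+1) p -> List.In p Q.
  move=> p [t [t01 <-]] on_g.
  by have [j [j_n on_j]] := al_on t t01; apply: (meetQ j).
have [be [be_cont [be_simple [be0 [be1 be_on]]]]] :=
  @concat_simple_curves al (ga n.+1) al_cont al_simple g_cont g_simple
    (etrans al1 (ga_chain n n_N)) (ltac:(rewrite al0; exact: ga_ends _ n_N))
    (ex_intro _ Q al_meet).
exists be; do 2 (split=> //); split; first by rewrite be0.
split=> // t t01; case: (be_on t t01) => [[s [s01 <-]]|on_g]; last by exists n.+1.
by have [j [j_n on_j]] := al_on s s01; exists j; split=> //; apply: leqW.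
Qed.

End Curves.

Lemma eq_set2_of_mem (T : finType) (a b x y : T) :
  a != b -> a \in [set x; y] -> b \in [set x; y] -> [set a; b] = [set x; y].
Proof.
move=> ab ax bx; apply/eqP; rewrite eqEcard !cards2 ab; apply/andP; split.
  by apply/subsetP => z /set2P [->|->].
by case: (x != y).
Qed.

Lemma eq_set2_cases (T : finType) (a b u v : T) : a != b -> [set a; b] = [set u; v] ->
  (u = a /\ v = b) \/ (u = b /\ v = a).
Proof.
move=> a_b E; have /set2P [u_a|u_b] : u \in [set a; b] by rewrite E set21.
  left; split=> //; have /set2P [b_u|->] // : b \in [set u; v] by rewrite -E set22.
  by move: a_b; rewrite -u_a b_u eqxx.
right; split=> //; have /set2P [a_u|->] // : a \in [set u; v] by rewrite -E set21.
by move: a_b; rewrite -u_b a_u eqxx.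
Qed.

Lemma uniq_path_edges_neq (T : finType) (x : T) (s : list T) i j :
  uniq (x :: s) -> (i < j < size s)%nat ->
  [set nth x (x :: s) i; nth x s i] <> [set nth x (x :: s) j; nth x s j].
Proof.
move=> xs_uniq /andP [ij j_s] E.
have nth_inj m n : (m <= size s)%nat -> (n <= size s)%nat ->
    nth x (x :: s) m = nth x (x :: s) n -> m = n.
  by move=> ms ns /eqP; rewrite nth_uniq ?ltnS // => /eqP.
have i_s : (i <= size s)%nat by rewrite ltnW // (ltn_trans ij j_s).
have : nth x (x :: s) i \in [set nth x (x :: s) j; nth x s j] by rewrite -E set21.
case/set2P => [/(nth_inj i j i_s (ltnW j_s))|/(nth_inj i j.+1 i_s j_s)] eq_ij;
  by move: ij; rewrite eq_ij ?ltnn // ltnNge leqnSn.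
Qed.

Lemma sadj_neq (G : sgraph) (a b : svert G) : sadj a b -> a != b.
Proof. by apply: contraTneq => ->; rewrite sadj_irr. Qed.

Lemma mem_pairmap_set2 (T : finType) (e : rel T) (x : T) (s : list T) g :
  path e x s -> g \in pairmap (fun a b => [set a; b]) x s ->
  exists a b, e a b /\ g = [set a; b] /\ a \in x :: s /\ b \in x :: s.
Proof.
elim: s x => [|y s IH] x //= /andP [xy ys]; rewrite inE => /orP [/eqP ->|g_s].
  by exists x, y; rewrite !inE !eqxx ?orbT.
have [a [b [ab [-> [a_s b_s]]]]] := IH y ys g_s.
by exists a, b; rewrite inE a_s inE b_s !orbT.
Qed.

Lemma In_mem (T : eqType) (x : T) (s : list T) : List.In x s <-> x \in s.
Proof.
elim: s => [|y s IH] //=; rewrite inE; split.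
- by case=> [->|/IH ->]; rewrite ?eqxx ?orbT.
- by case/orP => [/eqP ->|/IH]; [left|right].
Qed.

Lemma length_size (T : Type) (s : list T) : length s = size s.
Proof. by elim: s => //= x s ->. Qed.

Lemma length_flat_map_le (A B : Type) (f : A -> list B) (l : list A) (k : nat) :
  (forall a, List.In a l -> (length (f a) <= k)%coq_nat) ->
  (length (List.flat_map f l) <= length l * k)%coq_nat.
Proof.
elim: l => [|a l IH] fk //=.
rewrite List.length_app mulSn; have := fk a (or_introl erefl).
have := IH (fun b lb => fk b (or_intror lb)); lia.
Qed.

Section GapPlanarDrawing.
Variables (G : sgraph) (k : nat) (pos : svert G -> point)
  (curve : {set svert G} -> R -> point).
Hypothesis drawing : is_drawing pos curve.
Variable chi : {set svert G} -> {set svert G} -> point -> {set svert G}.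
Hypothesis chi_crossing : forall e1 e2 p, crossing curve e1 e2 p ->
  chi e1 e2 p = chi e2 e1 p /\ (chi e1 e2 p = e1 \/ chi e1 e2 p = e2).
Hypothesis chi_bounded : forall e, is_edge e ->
  exists l : list ({set svert G} * point), (length l <= k)%coq_nat /\
    forall f p, crossing curve e f p -> chi e f p = e -> List.In (f, p) l.

Lemma is_edge_set2 (a b : svert G) : sadj a b -> is_edge [set a; b].
Proof. by exists a, b. Qed.

Lemma drawing_pos_inj : injective pos.
Proof. by case: drawing. Qed.

Lemma drawing_edge_curve e : is_edge e ->
  curve_continuous (curve e) /\ curve_simple (curve e) /\
  exists u v, e = [set u; v] /\ curve e 0%R = pos u /\ curve e 1%R = pos v.
Proof. by case: drawing => _ [edge_curves _]; apply: edge_curves. Qed.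

Lemma drawing_interior_not_vertex e w p :
  is_edge e -> on_interior (curve e) p -> p <> pos w.
Proof. by case: drawing => _ [_ [not_vertex _]]; apply: not_vertex. Qed.

Lemma crossing_unique_edges g1 g2 h p :
  crossing curve g1 g2 p -> is_edge h -> on_interior (curve h) p -> h = g1 \/ h = g2.
Proof.
move=> [g1_edge [g2_edge [g12 [on_g1 on_g2]]]] h_edge on_h.
case: (classic (h = g1)) => [|h1]; first by left.
case: (classic (h = g2)) => [|h2]; first by right.
have [_ [_ [_ no_triple_point]]] := drawing.
by case: (no_triple_point h g1 g2 p h_edge g1_edge g2_edge h1 h2 g12 on_h on_g1 on_g2).
Qed.

Lemma on_edge_curve (a b : svert G) p : sadj a b -> on_curve (curve [set a; b]) p ->
  p = pos a \/ p = pos b \/ on_interior (curve [set a; b]) p.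
Proof.
move=> ab [s [[s0 s1] <-]].
have [_ [_ [u [v [E [e0 e1]]]]]] := drawing_edge_curve (is_edge_set2 ab).
have ends := eq_set2_cases (sadj_neq ab) E.
case: (Req_dec s 0) => [->|s_0]; first by rewrite e0; case: ends => [[-> _]|[-> _]]; tauto.
case: (Req_dec s 1) => [->|s_1]; first by rewrite e1; case: ends => [[_ ->]|[_ ->]]; tauto.
by right; right; exists s; split=> //; lra.
Qed.

Definition traverses (a b : svert G) (ga : R -> point) : Prop :=
  curve_continuous ga /\ curve_simple ga /\ ga 0%R = pos a /\ ga 1%R = pos b /\
  forall p, on_curve ga p -> on_curve (curve [set a; b]) p.

Lemma traverses_edge (a b : svert G) : sadj a b -> exists ga, traverses a b ga.
Proof.
move=> ab; have [gc [gs [u [v [E [e0 e1]]]]]] := drawing_edge_curve (is_edge_set2 ab).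
case: (eq_set2_cases (sadj_neq ab) E) => [[u_a v_b]|[u_b v_a]]; subst u v.
  by exists (curve [set a; b]); do 4 (split=> //).
have [rc [rs r_on]] := reverse_curve gc gs.
exists (fun t => curve [set a; b] (1 - t)%R); do 2 (split=> //).
by rewrite Rminus_0_r Rminus_diag e0 e1.
Qed.

Lemma edge_interiors_meet_finitely g g' : is_edge g -> is_edge g' -> g <> g' ->
  exists Q, forall p, on_interior (curve g) p -> on_interior (curve g') p -> List.In p Q.
Proof.
move=> g_edge g'_edge gg'.
have [l [_ lg]] := chi_bounded g_edge.
have [l' [_ lg']] := chi_bounded g'_edge.
exists (List.map snd (l ++ l')) => p on_g on_g'.
have cr : crossing curve g g' p by [].
have cr' : crossing curve g' g p by do 2 (split=> //); split=> //; apply: nesym.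
apply/List.in_map_iff; have [chi_sym [chi_g|chi_g']] := chi_crossing cr.
  by exists (g', p); split=> //; apply: List.in_or_app; left; apply: lg.
by exists (g, p); split=> //; apply: List.in_or_app; right; apply: lg' => //; rewrite -chi_sym.
Qed.

Lemma edge_curves_meet_finitely (a b a' b' : svert G) :
  sadj a b -> sadj a' b' -> [set a; b] <> [set a'; b'] ->
  exists Q, forall p,
    on_curve (curve [set a; b]) p -> on_curve (curve [set a'; b']) p -> List.In p Q.
Proof.
move=> ab a'b' E.
have [Q QE] := edge_interiors_meet_finitely (is_edge_set2 ab) (is_edge_set2 a'b') E.
exists ([:: pos a; pos b; pos a'; pos b'] ++ Q) => p on_ab on_ab' /=.
case: (on_edge_curve ab on_ab) => [->|[->|int_ab]]; try by intuition.
by case: (on_edge_curve a'b' on_ab') => [->|[->|int_ab']]; intuition.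
Qed.

Lemma charged_crossing_lists :
  exists lG : {set svert G} -> list ({set svert G} * point),
    forall g, is_edge g -> (length (lG g) <= k)%coq_nat /\
      forall f p, crossing curve g f p -> chi g f p = g -> List.In (f, p) (lG g).
Proof.
apply: (ClassicalEpsilon.choice (fun g l => is_edge g -> (length l <= k)%coq_nat /\
  forall f p, crossing curve g f p -> chi g f p = g -> List.In (f, p) l)) => g.
by case: (classic (is_edge g)) => [/chi_bounded [l l_spec]|not_edge]; [exists l|exists nil].
Qed.

Lemma traversing_path_curves (x : svert G) (s : list (svert G)) :
  path (@sadj G) x s -> exists ga : nat -> R -> point,
    forall j, (j < size s)%nat -> traverses (nth x (x :: s) j) (nth x s j) (ga j).
Proof.
move=> /(pathP x) adj.
apply: (ClassicalEpsilon.choice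
  (fun j ga => (j < size s)%nat -> traverses (nth x (x :: s) j) (nth x s j) ga)) => j.
case: (ltnP j (size s)) => [j_s|sj].
  by have [ga tr] := traverses_edge (adj j j_s); exists ga.
by exists (fun _ => pos x).
Qed.

Lemma path_curve (x : svert G) (s : list (svert G)) :
  path (@sadj G) x s -> uniq (x :: s) -> s != [::] ->
  exists al, curve_continuous al /\ curve_simple al /\
    al 0%R = pos x /\ al 1%R = pos (last x s) /\
    forall t, in01 t -> exists g, g \in pairmap (fun a b => [set a; b]) x s /\
      on_curve (curve g) (al t).
Proof.
move=> xs_path xs_uniq s_nil.
have [ga ga_tr] := traversing_path_curves xs_path.
move/(pathP x): xs_path => adj.
set N := (size s).-1.
have sN : size s = N.+1 by rewrite /N prednK // lt0n size_eq0.
have ltN j : (j <= N)%nat -> (j < size s)%nat by rewrite sN ltnS.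
have [al [al_c [al_s [al0 [al1 al_on]]]]] :
    exists al, curve_continuous al /\ curve_simple al /\ al 0%R = ga 0%nat 0%R /\
      al 1%R = ga N 1%R /\ forall t, in01 t -> exists j, (j <= N)%nat /\ on_curve (ga j) (al t).
  apply: concat_simple_curve_chain (leqnn N).
  - by move=> j /ltN /ga_tr [? [? _]].
  - move=> j jN; have [_ [_ [_ [-> _]]]] := ga_tr j (ltN j (ltnW jN)).
    by have [_ [_ [-> _]]] := ga_tr j.+1 (ltN _ jN).
  - move=> i j /andP [ij /ltN j_s]; have i_s := ltn_trans ij j_s.
    have [_ [_ [_ [_ on_i]]]] := ga_tr i i_s.
    have [_ [_ [_ [_ on_j]]]] := ga_tr j j_s.
    have [|Q meetQ] := edge_curves_meet_finitely (adj i i_s) (adj j j_s).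
      by apply: uniq_path_edges_neq; rewrite ?ij.
    by exists Q => p /on_i on_i' /on_j on_j'; apply: meetQ.
  - move=> j /ltN j_s; have [_ [_ [-> _]]] := ga_tr 0%nat (ltN 0%nat (leq0n N)).
    have [_ [_ [_ [-> _]]]] := ga_tr j j_s.
    move/drawing_pos_inj => /= x_nth; have : x \in s by rewrite {1}x_nth mem_nth.
    by move: xs_uniq => /andP [/negP].
have [_ [_ [ga0 _]]] := ga_tr 0%nat (ltN 0%nat (leq0n N)).
have [_ [_ [_ [gaN _]]]] := ga_tr N (ltN N (leqnn N)).
exists al; do 2 (split=> //); split; first by rewrite al0 ga0.
split; first by rewrite al1 gaN /N nth_last.
move=> t t01; have [j [/ltN j_s on_j]] := al_on t t01.
have [_ [_ [_ [_ on_e]]]] := ga_tr j j_s.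
exists [set nth x (x :: s) j; nth x s j]; split; last exact: on_e.
rewrite -(nth_pairmap x set0 (fun a b => [set a; b]) j_s x).
by apply: mem_nth; rewrite size_pairmap.
Qed.

Section Subdivision.
Variables (H : sgraph) (c : nat) (phi : svert H -> svert G)
  (P : svert H -> svert H -> list (svert G)).
Hypothesis phi_inj : injective phi.
Hypothesis size_P : forall u v : svert H, sadj u v -> (size (P u v) <= c)%nat.
Hypothesis path_P : forall u v : svert H, sadj u v ->
  path (@sadj G) (phi u) (rcons (P u v) (phi v)).
Hypothesis uniq_P : forall u v : svert H, sadj u v -> uniq (phi u :: rcons (P u v) (phi v)).
Hypothesis P_not_branch : forall (u v : svert H) x w, sadj u v -> x \in P u v -> x != phi w.
Hypothesis P_disjoint : forall u v u' v' : svert H, sadj u v -> sadj u' v' ->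
  [set u; v] <> [set u'; v'] -> forall x, x \in P u v -> x \notin P u' v'.

Definition path_edges (u v : svert H) : list {set svert G} :=
  pairmap (fun a b => [set a; b]) (phi u) (rcons (P u v) (phi v)).

Lemma path_edges_edge u v g : sadj u v -> g \in path_edges u v -> is_edge g.
Proof.
by move=> uv /(mem_pairmap_set2 (path_P uv)) [a [b [ab [-> _]]]]; apply: is_edge_set2.
Qed.

Lemma size_path_edges u v : sadj u v -> (size (path_edges u v) <= c.+1)%nat.
Proof. by move=> uv; rewrite size_pairmap size_rcons ltnS size_P. Qed.

Lemma shared_path_vertex u v u' v' y : sadj u v -> sadj u' v' -> [set u; v] <> [set u'; v'] ->
  y \in phi u :: rcons (P u v) (phi v) -> y \in phi u' :: rcons (P u' v') (phi v') ->
  y \in [set phi u; phi v].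
Proof.
move=> uv u'v' uvE; rewrite !inE !mem_rcons !inE => /or3P [->|->|y_P] //; first by rewrite orbT.
rewrite (negbTE (P_disjoint uv u'v' uvE y_P)) orbF => /orP [] /eqP y_branch.
- by move: (P_not_branch u' uv y_P); rewrite y_branch eqxx.
- by move: (P_not_branch v' uv y_P); rewrite y_branch eqxx.
Qed.

Lemma path_edges_disjoint u v u' v' g : sadj u v -> sadj u' v' -> [set u; v] <> [set u'; v'] ->
  g \in path_edges u v -> g \notin path_edges u' v'.
Proof.
move=> uv u'v' uvE /(mem_pairmap_set2 (path_P uv)) [a [b [ab [-> [a_in b_in]]]]].
apply/negP => /(mem_pairmap_set2 (path_P u'v')) [a' [b' [_ [E [a'_in b'_in]]]]].
have in' z : z \in [set a; b] -> z \in phi u' :: rcons (P u' v') (phi v').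
  by rewrite E => /set2P [->|->].
have a_b := sadj_neq ab.
have E1 : [set a; b] = [set phi u; phi v].
  by apply: eq_set2_of_mem a_b _ _; apply: (shared_path_vertex uv u'v' uvE) => //;
    apply: in'; rewrite ?set21 ?set22.
have E2 : [set a; b] = [set phi u'; phi v'].
  by apply: eq_set2_of_mem a_b _ _; apply: (shared_path_vertex u'v' uv (nesym uvE)) => //;
    apply: in'; rewrite ?set21 ?set22.
apply: uvE; apply: (imset_inj phi_inj).
by rewrite !imsetU1 !imset_set1 -E1 -E2.
Qed.

Definition draws_subdivided_edge (E : {set svert H}) (al : R -> point)
    (es : list {set svert G}) (ys : list (svert G)) : Prop :=
  exists u v, sadj u v /\ E = [set u; v] /\ es = path_edges u v /\ ys = P u v /\
    curve_continuous al /\ curve_simple al /\ al 0%R = pos (phi u) /\ al 1%R = pos (phi v) /\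
    forall t, (0 < t < 1)%R ->
      (exists y, y \in ys /\ al t = pos y) \/
      (exists g, g \in es /\ on_interior (curve g) (al t)).

Lemma subdivided_edge_curve u v : sadj u v ->
  exists al, draws_subdivided_edge [set u; v] al (path_edges u v) (P u v).
Proof.
move=> uv; have [|al [al_c [al_s [al0 [al1 al_on]]]]] := path_curve (path_P uv) (uniq_P uv).
  by rewrite -size_eq0 size_rcons.
rewrite last_rcons in al1.
exists al, u, v; do 8 split=> //; move=> t [t0 t1].
have t01 : in01 t by split; lra.
have [g [g_in on_g]] := al_on t t01.
have [a [b [ab [g_ab [a_in b_in]]]]] := mem_pairmap_set2 (path_P uv) g_in.
have inner y : y \in phi u :: rcons (P u v) (phi v) -> al t = pos y -> y \in P u v.
  rewrite inE mem_rcons inE => /or3P [/eqP ->|/eqP ->|//] E.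
  - by have := al_s t 0%R t01 ltac:(split; lra) (etrans E (esym al0)); lra.
  - by have := al_s t 1%R t01 ltac:(split; lra) (etrans E (esym al1)); lra.
rewrite g_ab in on_g; case: (on_edge_curve ab on_g) => [E|[E|int_g]].
- by left; exists a; split=> //; apply: inner.
- by left; exists b; split=> //; apply: inner.
- by right; exists g; rewrite {2}g_ab.
Qed.

Lemma subdivided_edge_curves :
  exists (curveH : {set svert H} -> R -> point) (edgesH : {set svert H} -> list {set svert G})
    (innerH : {set svert H} -> list (svert G)),
    forall E, is_edge E -> draws_subdivided_edge E (curveH E) (edgesH E) (innerH E).
Proof.
pose drawn E (x : (R -> point) * list {set svert G} * list (svert G)) :=
  is_edge E -> draws_subdivided_edge E x.1.1 x.1.2 x.2.
have [f f_draws] : exists f, forall E, drawn E (f E).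
  apply: ClassicalEpsilon.choice => E.
  case: (classic (is_edge E)) => [[u [v [uv ->]]]|not_edge].
    by have [al al_draws] := subdivided_edge_curve uv; exists (al, path_edges u v, P u v).
  by exists (fun _ => (0, 0)%R, [::], [::]).
by exists (fun E => (f E).1.1), (fun E => (f E).1.2), (fun E => (f E).2).
Qed.

Section DrawingOfH.
Variables (curveH : {set svert H} -> R -> point) (edgesH : {set svert H} -> list {set svert G})
  (innerH : {set svert H} -> list (svert G)).
Hypothesis curveH_draws :
  forall E, is_edge E -> draws_subdivided_edge E (curveH E) (edgesH E) (innerH E).

Lemma edgesH_edge E g : is_edge E -> g \in edgesH E -> is_edge g.
Proof. by move=> /curveH_draws [u [v [uv [_ [-> _]]]]]; apply: path_edges_edge. Qed.

Lemma size_edgesH E : is_edge E -> (size (edgesH E) <= c.+1)%nat.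
Proof. by move=> /curveH_draws [u [v [uv [_ [-> _]]]]]; apply: size_path_edges. Qed.

Lemma edgesH_disjoint E F g : is_edge E -> is_edge F -> E <> F ->
  g \in edgesH E -> g \notin edgesH F.
Proof.
move=> /curveH_draws [u [v [uv [-> [-> _]]]]] /curveH_draws [u' [v' [u'v' [-> [-> _]]]]].
exact: path_edges_disjoint.
Qed.

Lemma innerH_disjoint E F y : is_edge E -> is_edge F -> E <> F ->
  y \in innerH E -> y \notin innerH F.
Proof.
move=> /curveH_draws [u [v [uv [-> [_ [-> _]]]]]] /curveH_draws [u' [v' [u'v' [-> [_ [-> _]]]]]].
by move=> EF; apply: P_disjoint.
Qed.

Lemma innerH_not_branch E y w : is_edge E -> y \in innerH E -> y != phi w.
Proof. by move=> /curveH_draws [u [v [uv [_ [_ [-> _]]]]]]; apply: P_not_branch. Qed.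

Lemma on_interior_curveH E p : is_edge E -> on_interior (curveH E) p ->
  (exists y, y \in innerH E /\ p = pos y) \/
  (exists g, g \in edgesH E /\ on_interior (curve g) p).
Proof.
move=> /curveH_draws [u [v [_ [_ [_ [_ [_ [_ [_ [_ al_int]]]]]]]]]] [t [t_int <-]].
by case: (al_int t t_int) => [[y y_E]|[g g_E]]; [left; exists y|right; exists g].
Qed.

Lemma crossingH_lift E F p : is_edge E -> is_edge F -> E <> F ->
  on_interior (curveH E) p -> on_interior (curveH F) p ->
  exists g1 g2, g1 \in edgesH E /\ g2 \in edgesH F /\ crossing curve g1 g2 p.
Proof.
move=> E_edge F_edge EF /(on_interior_curveH E_edge) [[y [y_E ->]]|[g1 [g1_E on_g1]]]
  /(on_interior_curveH F_edge) [[y' [y'_F y_y']]|[g2 [g2_F on_g2]]].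
- rewrite (drawing_pos_inj y_y') in y_E.
  by move: (innerH_disjoint E_edge F_edge EF y_E); rewrite y'_F.
- by case: (drawing_interior_not_vertex (edgesH_edge F_edge g2_F) on_g2 erefl).
- by case: (drawing_interior_not_vertex (edgesH_edge E_edge g1_E) on_g1 y_y').
exists g1, g2; do 2 (split=> //); split; first exact: edgesH_edge g1_E.
split; first exact: edgesH_edge g2_F.
split=> // g12; move: (edgesH_disjoint E_edge F_edge EF g1_E).
by rewrite g12 g2_F.
Qed.

Lemma curveH_drawing : is_drawing (fun w => pos (phi w)) curveH.
Proof.
split; first by move=> w w' /drawing_pos_inj /phi_inj.
split.
  move=> E /curveH_draws [u [v [_ [-> [_ [_ [al_c [al_s [al0 [al1 _]]]]]]]]]].
  by do 2 (split=> //); exists u, v.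
split.
  move=> E w p E_edge /(on_interior_curveH E_edge) [[y [y_E ->]]|[g [g_E on_g]]].
    by move/drawing_pos_inj => y_w; move: (innerH_not_branch w E_edge y_E); rewrite y_w eqxx.
  exact: drawing_interior_not_vertex (edgesH_edge E_edge g_E) on_g.
move=> E1 E2 E3 p E1_edge E2_edge E3_edge E12 E13 E23 on_E1 on_E2 on_E3.
have [g1 [g2 [g1_E1 [g2_E2 cr12]]]] := crossingH_lift E1_edge E2_edge E12 on_E1 on_E2.
have [g1' [g3 [_ [g3_E3 [_ [g3_edge [_ [_ on_g3]]]]]]]] :=
  crossingH_lift E1_edge E3_edge E13 on_E1 on_E3.
have [g31|g32] := crossing_unique_edges cr12 g3_edge on_g3.
- by move: (edgesH_disjoint E1_edge E3_edge E13 g1_E1); rewrite -g31 g3_E3.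
- by move: (edgesH_disjoint E2_edge E3_edge E23 g2_E2); rewrite -g32 g3_E3.
Qed.

Definition charged_in (E : {set svert H}) (p : point) : Prop :=
  exists g f, g \in edgesH E /\ crossing curve g f p /\ chi g f p = g.

Lemma charged_inE E F p g1 g2 : is_edge E -> is_edge F -> E <> F ->
  g1 \in edgesH E -> g2 \in edgesH F -> crossing curve g1 g2 p ->
  charged_in E p <-> chi g1 g2 p = g1.
Proof.
move=> E_edge F_edge EF g1_E g2_F cr12; split; last by move=> chi_g1; exists g1, g2.
move=> [g [f [g_E [[g_edge [f_edge [gf [on_g on_f]]]] chi_g]]]].
have g_g1 : g = g1.
  case: (crossing_unique_edges cr12 g_edge on_g) => // g_g2.
  by move: (edgesH_disjoint E_edge F_edge EF g_E); rewrite g_g2 g2_F.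
subst g; case: (crossing_unique_edges cr12 f_edge on_f) => [f_g1|f_g2].
  by case: gf; rewrite f_g1.
by rewrite -f_g2.
Qed.

Definition chiH (E F : {set svert H}) (p : point) : {set svert H} :=
  if excluded_middle_informative (charged_in E p) then E else F.

Lemma chiH_charged E F p : charged_in E p -> chiH E F p = E.
Proof. by rewrite /chiH; case: excluded_middle_informative. Qed.

Lemma chiH_not_charged E F p : ~ charged_in E p -> chiH E F p = F.
Proof. by rewrite /chiH; case: excluded_middle_informative. Qed.

Lemma chiH_crossing E F p : crossing curveH E F p ->
  chiH E F p = chiH F E p /\ (chiH E F p = E \/ chiH E F p = F).
Proof.
move=> [E_edge [F_edge [EF [on_E on_F]]]].
have [g1 [g2 [g1_E [g2_F cr12]]]] := crossingH_lift E_edge F_edge EF on_E on_F.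
have [g1_edge [g2_edge [g12 [on_g1 on_g2]]]] := cr12.
have cr21 : crossing curve g2 g1 p by do 2 (split=> //); split; first exact: nesym.
have [chi_sym chi_g1_g2] := chi_crossing cr12.
have E_charged := charged_inE E_edge F_edge EF g1_E g2_F cr12.
have F_charged := charged_inE F_edge E_edge (nesym EF) g2_F g1_E cr21.
case: (classic (charged_in E p)) => [cE|nE]; case: (classic (charged_in F p)) => [cF|nF].
- by case: g12; rewrite -(proj1 E_charged cE) chi_sym (proj1 F_charged cF).
- by rewrite (@chiH_charged E F p cE) (@chiH_not_charged F E p nF); split=> //; left.
- by rewrite (@chiH_not_charged E F p nE) (@chiH_charged F E p cF); split=> //; right.
- case: chi_g1_g2 => [/E_charged //|chi2].
  by case: nF; apply/F_charged; rewrite -chi_sym.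
Qed.

Definition branch_edge (g : {set svert G}) : {set svert H} :=
  epsilon (inhabits set0) (fun F => is_edge F /\ g \in edgesH F).

Lemma branch_edgeE F g : is_edge F -> g \in edgesH F -> branch_edge g = F.
Proof.
move=> F_edge g_F.
have [F'_edge g_F'] : is_edge (branch_edge g) /\ g \in edgesH (branch_edge g).
  exact: (epsilon_spec (inhabits set0) (fun F => is_edge F /\ g \in edgesH F)
    (ex_intro _ F (conj F_edge g_F))).
apply: NNPP => F'F.
by move: (edgesH_disjoint F'_edge F_edge F'F g_F'); rewrite g_F.
Qed.

Lemma chiH_bounded E : is_edge E ->
  exists l : list ({set svert H} * point), (length l <= c.+1 * k)%coq_nat /\
    forall F p, crossing curveH E F p -> chiH E F p = E -> List.In (F, p) l.
Proof.
move=> E_edge; have [lG lG_spec] := charged_crossing_lists.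
exists (List.flat_map (fun g => List.map (fun fp => (branch_edge fp.1, fp.2)) (lG g))
  (edgesH E)); split.
  have branch_len g : List.In g (edgesH E) ->
      (length (List.map (fun fp => (branch_edge fp.1, fp.2)) (lG g)) <= k)%coq_nat.
    move=> /In_mem g_E; rewrite List.length_map.
    exact: (lG_spec g (edgesH_edge E_edge g_E)).1.
  have := length_flat_map_le branch_len.
  have := size_edgesH E_edge; rewrite -length_size; nia.
move=> F p [_ [F_edge [EF [on_E on_F]]]].
case: (classic (charged_in E p)) => [charged _|uncharged]; last first.
  by rewrite chiH_not_charged // => FE; case: EF; rewrite FE.
have [g1 [g2 [g1_E [g2_F cr12]]]] := crossingH_lift E_edge F_edge EF on_E on_F.
have chi1 := proj1 (charged_inE E_edge F_edge EF g1_E g2_F cr12) charged.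
have g2_lG := (lG_spec g1 (edgesH_edge E_edge g1_E)).2 g2 p cr12 chi1.
apply/List.in_flat_map; exists g1; split; first exact/In_mem.
by apply/List.in_map_iff; exists (g2, p); rewrite /= (branch_edgeE F_edge g2_F).
Qed.

Lemma curveH_gap_planar : gap_planar_drawing curveH (c.+1 * k).
Proof. by exists chiH; split; [exact: chiH_crossing|exact: chiH_bounded]. Qed.

End DrawingOfH.

End Subdivision.

End GapPlanarDrawing.

Theorem lemma10 (k c : nat) (G H : sgraph) :
  k_gap_planar G k -> has_subdivision_subgraph G H c ->
  k_gap_planar H (c.+1 * k).
Proof.
move=> [pos [curve [drawing [chi [chi_crossing chi_bounded]]]]]
  [phi [P [phi_inj [P_paths P_disjoint]]]].
have size_P (u v : svert H) : sadj u v -> (size (P u v) <= c)%nat.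
  by case/P_paths => _ [].
have path_P (u v : svert H) : sadj u v -> path (@sadj G) (phi u) (rcons (P u v) (phi v)).
  by case/P_paths => _ [_ []].
have uniq_P (u v : svert H) : sadj u v -> uniq (phi u :: rcons (P u v) (phi v)).
  by case/P_paths => _ [_ [_ []]].
have P_not_branch (u v : svert H) x w : sadj u v -> x \in P u v -> x != phi w.
  by case/P_paths => _ [_ [_ [_ not_branch]]]; apply: not_branch.
have [curveH [edgesH [innerH draws]]] :=
  subdivided_edge_curves drawing chi_crossing chi_bounded path_P uniq_P.
exists (fun w => pos (phi w)), curveH; split.
  exact: (curveH_drawing drawing phi_inj path_P P_not_branch P_disjoint draws).
exact: (curveH_gap_planar drawing chi_crossing chi_bounded
  phi_inj size_P path_P P_not_branch P_disjoint draws).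
Qed.
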